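(* For every $d$-dimensional state $\rho$ and all integers $1\le k\le d$, \[ \mu_k(\rho)\le\log\big[l(\rho)+\lambda(\rho)(k-l(\rho))\big]. \]
   Context: Fixed computational basis; $\Delta$ the dephasing map; $\Pi_I=\sum_{i\in I}|i\rangle\langle i|$; logs base 2. $R^\rho=\Delta(\rho)^{-1/2}\rho\Delta(\rho)^{-1/2}$ (inverse on the support); $\mu_k(\rho)=\max_{I\subseteq[d],|I|\le k}\log\|\Pi_IR^\rho\Pi_I\|_\infty$; $l(\rho)=\max\{\mathrm{rk}(\Pi_I\Delta(\rho)\Pi_I):\ I\subseteq[d],\ \mathrm{rk}(\Pi_I\rho\Pi_I)=1\}$; $\lambda(\rho)=\max\{|R^\rho_{ij}|:1\le i<j\le d,\ |R^\rho_{ij}|<1\}$, set to $0$ if the set is empty. *)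

From HB Require Import structures.
From mathcomp Require Import all_boot all_order all_algebra.
From mathcomp Require Import complex.
From mathcomp Require Import all_classical all_reals all_analysis.
Set Implicit Arguments. Unset Strict Implicit. Unset Printing Implicit Defensive.
Import Order.TTheory GRing.Theory Num.Theory.
Local Open Scope ring_scope.

Section Defs.
Variable R : realType.
Local Notation C := (R[i]).
Variable d : nat.

Definition adjmx (A : 'M[C]_d) : 'M[C]_d := \matrix_(i, j) (A j i)^*.
Definition adjv (v : 'cV[C]_d) : 'rV[C]_d := \row_j (v j 0)^*.

Definition is_state (rho : 'M[C]_d) : Prop :=
  [/\ adjmx rho = rho,
      forall v : 'cV[C]_d, 0 <= (adjv v *m rho *m v) 0 0
    & \tr rho = 1].

Definition dephase (rho : 'M[C]_d) : 'M[C]_d := diag_mx (\row_i rho i i).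

(* Delta(rho)^{-1/2}, inverse taken on the support *)
Definition dephase_isqrt (rho : 'M[C]_d) : 'M[C]_d :=
  diag_mx (\row_i (if rho i i != 0 then (sqrtC (rho i i))^-1 else 0)).

Definition Rmat (rho : 'M[C]_d) : 'M[C]_d :=
  dephase_isqrt rho *m rho *m dephase_isqrt rho.

Definition proj (I : {set 'I_d}) : 'M[C]_d := diag_mx (\row_i (i \in I)%:R).

Definition cabs (x : C) : R := complex.Re `|x|.

Definition vnorm (v : 'cV[C]_d) : R := Num.sqrt (\sum_i cabs (v i 0) ^+ 2).

Definition opnorm (A : 'M[C]_d) : R :=
  sup [set r : R | exists v : 'cV[C]_d, vnorm v = 1 /\ r = vnorm (A *m v)].

Definition log2 (x : R) : R := ln x / ln 2.

(* mu_k(rho) = max_{|I|<=k} log ||Pi_I R Pi_I|| , written as log of the max *)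
Definition mu (k : nat) (rho : 'M[C]_d) : R :=
  log2 (\big[Num.max/0]_(I : {set 'I_d} | (#|I| <= k)%N)
          opnorm (proj I *m Rmat rho *m proj I)).

Definition ell (rho : 'M[C]_d) : nat :=
  \max_(I : {set 'I_d} | \rank (proj I *m rho *m proj I) == 1%N)
     \rank (proj I *m dephase rho *m proj I).

(* lambda(rho); the big max over an empty range is 0 *)
Definition lam (rho : 'M[C]_d) : R :=
  \big[Num.max/0]_(ij : 'I_d * 'I_d |
       (ij.1 < ij.2)%N && (cabs (Rmat rho ij.1 ij.2) < 1))
     cabs (Rmat rho ij.1 ij.2).

End Defs.

From Pilot Require Import Defs.
From HB Require Import structures.
From mathcomp Require Import all_boot all_order all_algebra.
From mathcomp Require Import complex.
From mathcomp Require Import all_classical all_reals all_analysis.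
From mathcomp Require Import ring lra.
Import Order.TTheory GRing.Theory Num.Theory.
Local Open Scope ring_scope.
Set Implicit Arguments. Unset Strict Implicit.

(* Cauchy-Schwarz for the positive form [(u, w) |-> u^* rho w] gives
   [|rho_ab|^2 <= rho_aa rho_bb], so every entry of R^rho has modulus at most 1,
   with [|R_ab| = 1] exactly in the equality case.  Equality forces
   [rho_xy rho_aa = rho_xa rho_ay] for all x, y in [K_a = {b | |R_ab| = 1}], so
   [Pi_K rho Pi_K] has rank one while [Pi_K Delta(rho) Pi_K] has rank [|K_a|];
   hence [|K_a| <= l(rho)].  In row a of [Pi_I R Pi_I] with [|I| <= k], at most
   l(rho) entries thus have modulus 1 and the others modulus at most lambda(rho),
   so every row sum is at most [l + lambda (k - l)].  As [|R_ab|] is symmetric,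
   the Schur test bounds the operator norm by the largest row sum. *)

Section ComplexModulus.
Variable R : realType.
Local Notation C := R[i].

Lemma cabsE (x : C) : `|x| = (cabs x)%:C%C.
Proof. by case: x => a b; rewrite normc_def. Qed.

Lemma cabs_ge0 (x : C) : 0 <= cabs x.
Proof. by rewrite -ler0c -cabsE. Qed.

Lemma cabs0 : cabs (0 : C) = 0.
Proof. by apply: (@complexI R); rewrite -cabsE normr0. Qed.

Lemma cabs_eq0 (x : C) : (cabs x == 0) = (x == 0).
Proof. by rewrite -(inj_eq (@complexI R)) -cabsE normr_eq0. Qed.

Lemma cabs_nat n : cabs (n%:R : C) = n%:R.
Proof. by apply: (@complexI R); rewrite -cabsE normr_nat rmorph_nat. Qed.

Lemma cabsM (x y : C) : cabs (x * y) = cabs x * cabs y.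
Proof. by apply: (@complexI R); rewrite rmorphM -!cabsE normrM. Qed.

Lemma cabsX (x : C) n : cabs (x ^+ n) = cabs x ^+ n.
Proof. by apply: (@complexI R); rewrite rmorphXn -!cabsE normrX. Qed.

Lemma cabsV (x : C) : cabs x^-1 = (cabs x)^-1.
Proof. by apply: (@complexI R); rewrite fmorphV -!cabsE normfV. Qed.

Lemma cabsJ (x : C) : cabs x^* = cabs x.
Proof. by apply: (@complexI R); rewrite -!cabsE; exact: norm_conjC. Qed.

Lemma mulCJ (x : C) : x * x^* = (cabs x ^+ 2)%:C%C.
Proof. by rewrite -normCK cabsE rmorphXn. Qed.

Lemma ler_cabs_sum (I : finType) (F : I -> C) :
  cabs (\sum_i F i) <= \sum_i cabs (F i).
Proof.
rewrite -lecR -cabsE rmorph_sum /=.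
by under [X in _ <= X]eq_bigr do rewrite -cabsE; exact: ler_norm_sum.
Qed.

End ComplexModulus.

Section Projection.
Variables (R : realType) (d : nat).
Local Notation C := R[i].
Local Notation Pi I := (@Defs.proj R d I).

Lemma proj_mulmxE (I : {set 'I_d}) (A : 'M[C]_d) a b :
  (Pi I *m A *m Pi I) a b = (a \in I)%:R * A a b * (b \in I)%:R.
Proof. by rewrite /Defs.proj mul_mx_diag mul_diag_mx !mxE. Qed.

Lemma card_le_rank_dephase (A : 'M[C]_d) (J : {set 'I_d}) :
  {in J, forall b, A b b != 0} -> (#|J| <= \rank (Pi J *m dephase A *m Pi J))%N.
Proof.
move=> AJ_neq0; set N := Pi J *m dephase A *m Pi J.
pose f : 'I_#|J| -> 'I_d := enum_val.
have fJ p : f p \in J by exact: enum_valP.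
(* [L] and [U] cut out the [J]-block of [N] and rescale it to the identity. *)
pose L : 'M[C]_(#|J|, d) := \matrix_(p, x) (x == f p)%:R.
pose U : 'M[C]_(d, #|J|) := \matrix_(x, q) ((x == f q)%:R / A x x).
have LNU : L *m N *m U = 1%:M.
  apply/matrixP => p q; rewrite mxE (bigD1 (f q)) //= big1 => [|x /negbTE x_fq].
    rewrite [U _ q]mxE eqxx addr0 mxE (bigD1 (f p)) //= big1 => [|x /negbTE x_fp].
      rewrite [L p _]mxE eqxx mul1r addr0 proj_mulmxE /dephase !mxE !fJ.
      rewrite (inj_eq enum_val_inj).
      have [<- | _] := eqVneq p q; rewrite /= ?mulr0n ?mulr0 ?mul0r //.
      by rewrite !mulr1n; field; rewrite AJ_neq0.
    by rewrite [L p x]mxE x_fp mul0r.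
  by rewrite [U x q]mxE x_fq mul0r mulr0.
rewrite -(mxrank1 C #|J|) -LNU.
exact: leq_trans (mxrankM_maxl _ _) (mxrankM_maxr _ _).
Qed.

End Projection.

Lemma sumr_indicator (V : pzSemiRingType) (T : finType) (A : {pred T}) :
  \sum_t ((t \in A)%:R : V) = #|A|%:R.
Proof.
by rewrite -sumr_const [RHS]big_mkcond; apply: eq_bigr => t _; case: (t \in A).
Qed.

Section SchurTest.
Variables (R : realFieldType) (I : finType).

(* [2 (rhs - lhs) = \sum_(b, c) m b m c (x b - x c)^2]. *)
Lemma sqr_wsum_le (m x : I -> R) : (forall b, 0 <= m b) ->
  (\sum_b m b * x b) ^+ 2 <= (\sum_b m b) * (\sum_b m b * x b ^+ 2).
Proof.
move=> m_ge0.
have lhsE : (\sum_b m b * x b) ^+ 2 = \sum_b \sum_c m b * m c * (x b * x c).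
  rewrite expr2 mulr_suml; apply: eq_bigr => b _.
  by rewrite mulr_sumr; apply: eq_bigr => c _; ring.
have rhsE : (\sum_b m b) * (\sum_b m b * x b ^+ 2)
    = \sum_b \sum_c m b * m c * x c ^+ 2.
  rewrite mulr_suml; apply: eq_bigr => b _.
  by rewrite mulr_sumr; apply: eq_bigr => c _; ring.
have rhsE' : (\sum_b m b) * (\sum_b m b * x b ^+ 2)
    = \sum_b \sum_c m b * m c * x b ^+ 2.
  by rewrite rhsE exchange_big /=; apply: eq_bigr => b _; apply: eq_bigr => c _; ring.
have : 0 <= \sum_b \sum_c m b * m c * (x b - x c) ^+ 2.
  apply: sumr_ge0 => b _; apply: sumr_ge0 => c _.
  by apply: mulr_ge0; [exact: mulr_ge0 | exact: sqr_ge0].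
have -> : \sum_b \sum_c m b * m c * (x b - x c) ^+ 2 =
    \sum_b \sum_c m b * m c * x b ^+ 2 + \sum_b \sum_c m b * m c * x c ^+ 2
    - 2 * \sum_b \sum_c m b * m c * (x b * x c).
  rewrite mulr_sumr -big_split -sumrB /=; apply: eq_bigr => b _.
  by rewrite mulr_sumr -big_split -sumrB /=; apply: eq_bigr => c _; ring.
by rewrite -rhsE -rhsE' -lhsE; lra.
Qed.

Lemma schur_test (m : I -> I -> R) (x y : I -> R) (T : R) : 0 <= T ->
  (forall a b, 0 <= m a b) -> (forall a b, m a b = m b a) ->
  (forall a, \sum_b m a b <= T) ->
  (forall a, 0 <= y a) -> (forall a, y a <= \sum_b m a b * x b) ->
  \sum_a y a ^+ 2 <= T ^+ 2 * \sum_b x b ^+ 2.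
Proof.
move=> T_ge0 m_ge0 m_sym row_le y_ge0 y_le.
apply: (@le_trans _ _ (\sum_a T * \sum_b m a b * x b ^+ 2)).
  apply: ler_sum => a _.
  have ya2_le : y a ^+ 2 <= (\sum_b m a b * x b) ^+ 2.
    by rewrite ler_sqr ?nnegrE ?y_ge0 ?y_le // (le_trans (y_ge0 a)).
  apply: (le_trans ya2_le); apply: (le_trans (sqr_wsum_le x (m_ge0 a))).
  by rewrite ler_wpM2r ?row_le // sumr_ge0 // => b _; rewrite mulr_ge0 ?sqr_ge0.
rewrite -mulr_sumr expr2 -mulrA ler_wpM2l // exchange_big mulr_sumr /=.
apply: ler_sum => b _; rewrite -mulr_suml ler_wpM2r ?sqr_ge0 //.
by under eq_bigr do rewrite m_sym; exact: row_le.
Qed.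

End SchurTest.

Section OperatorNorm.
Variables (R : realType) (d : nat).

Lemma opnorm_le_row_sum (A : 'M[R[i]]_d) (T : R) : 0 <= T ->
  (forall a b, cabs (A a b) = cabs (A b a)) ->
  (forall a, \sum_b cabs (A a b) <= T) -> opnorm A <= T.
Proof.
move=> T_ge0 A_sym row_le; rewrite /opnorm.
set S := (X in sup X).
have [->|S_neq0] := eqVneq S set0; first by rewrite sup0.
apply: ge_sup => [|_ [v [v1 ->]]]; first exact/set0P.
have sum_v_ge0 : 0 <= \sum_b cabs (v b 0) ^+ 2.
  by rewrite sumr_ge0 // => b _; rewrite sqr_ge0.
have sum_v1 : \sum_b cabs (v b 0) ^+ 2 = 1.
  by rewrite -(sqr_sqrtr sum_v_ge0); move: v1; rewrite /vnorm => ->; rewrite expr1n.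
rewrite /vnorm -(ger0_norm T_ge0) -sqrtr_sqr ler_sqrt ?sqr_ge0 //.
rewrite -[X in _ <= X]mulr1 -sum_v1.
apply: (schur_test (m := fun a b => cabs (A a b))) => // [a b|a|a].
- exact: cabs_ge0.
- exact: cabs_ge0.
- rewrite mxE; apply: le_trans (ler_cabs_sum _) _.
  by apply: ler_sum => b _; rewrite cabsM.
Qed.

End OperatorNorm.

Lemma ler_log2 (R : realType) (x y : R) : 0 <= x -> x <= y -> 1 <= y ->
  log2 x <= log2 y.
Proof.
rewrite /log2 => x_ge0 le_xy y_ge1.
rewrite ler_wpM2r ?invr_ge0 ?ln_ge0 ?ler1n //.
have [->|x_neq0] := eqVneq x 0; first by rewrite ln0 // ln_ge0.
by rewrite ler_ln // posrE ?(lt_le_trans ltr01 y_ge1) // lt_def x_neq0.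
Qed.

Section State.
Variables (R : realType) (d : nat) (rho : 'M[R[i]]_d).
Local Notation C := R[i].
Local Notation Pi I := (@Defs.proj R d I).
Hypothesis rho_state : is_state rho.

Definition basis (i : 'I_d) (b : 'I_d) : C := (b == i)%:R.

Definition form (u w : 'I_d -> C) : C := \sum_a \sum_b (u a)^* * rho a b * w b.

Lemma stateC a b : rho b a = (rho a b)^*.
Proof. by case: rho_state => rho_adj _ _; rewrite -{1}rho_adj mxE. Qed.

Lemma form_ge0 u : 0 <= form u u.
Proof.
case: rho_state => _ /(_ (\col_a u a)) + _.
rewrite /form !mxE; under eq_bigr do rewrite !mxE.
rewrite exchange_big /=.
by under eq_bigr do (rewrite mulr_suml; under eq_bigr do rewrite !mxE).
Qed.

Lemma formC u w : (form u w)^* = form w u.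
Proof.
rewrite /form rmorph_sum exchange_big /=; apply: eq_bigr => b _.
rewrite rmorph_sum; apply: eq_bigr => a _.
by rewrite !rmorphM /= conjCK -stateC; ring.
Qed.

Lemma sum_basis (F : 'I_d -> C) i : \sum_b basis i b * F b = F i.
Proof.
rewrite (bigD1 i) //= big1 => [|b /negbTE b_i]; rewrite /basis ?eqxx ?b_i.
  by rewrite mul1r addr0.
by rewrite mul0r.
Qed.

Lemma form_basisl i w : form (basis i) w = \sum_b rho i b * w b.
Proof.
rewrite -[RHS](sum_basis (fun a => \sum_b rho a b * w b)).
apply: eq_bigr => a _; rewrite conjC_nat mulr_sumr.
by apply: eq_bigr => b _; rewrite mulrA.
Qed.

Lemma form_basis i j : form (basis i) (basis j) = rho i j.
Proof.
rewrite form_basisl -[RHS](sum_basis (rho i)).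
by apply: eq_bigr => b _; rewrite mulrC.
Qed.

Lemma form_subr u v w (x : C) :
  form u (fun b => v b - x * w b) = form u v - x * form u w.
Proof.
rewrite /form mulr_sumr -sumrB; apply: eq_bigr => a _.
by rewrite mulr_sumr -sumrB; apply: eq_bigr => b _; ring.
Qed.

Lemma form_subl u v w (x : C) :
  form (fun a => v a - x * w a) u = form v u - x^* * form w u.
Proof.
rewrite /form mulr_sumr -sumrB; apply: eq_bigr => a _.
by rewrite mulr_sumr -sumrB; apply: eq_bigr => b _; rewrite rmorphB rmorphM; ring.
Qed.

Lemma state_diag_ge0 i : 0 <= rho i i.
Proof. by rewrite -form_basis form_ge0. Qed.

Lemma state_diagJ i : (rho i i)^* = rho i i.
Proof. by rewrite -stateC. Qed.

Lemma form_schur_complement i v : rho i i != 0 ->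
  let x := form (basis i) v / rho i i in
  form (fun b => v b - x * basis i b) (fun b => v b - x * basis i b)
  = form v v - form (basis i) v * (form (basis i) v)^* / rho i i.
Proof.
move=> rii_neq0 x; rewrite form_subl !form_subr form_basis -(formC (basis i) v).
by rewrite /x rmorphM fmorphV /= state_diagJ; field.
Qed.

Lemma form_cauchy_schwarz i v : rho i i != 0 ->
  form (basis i) v * (form (basis i) v)^* <= rho i i * form v v.
Proof.
move=> rii_neq0.
have := form_ge0 (fun b => v b - form (basis i) v / rho i i * basis i b).
rewrite form_schur_complement // => schur_ge0.
have rii_gt0 : 0 < rho i i by rewrite lt_def rii_neq0 state_diag_ge0.
rewrite -subr_ge0; have := mulr_ge0 (ltW rii_gt0) schur_ge0.
by congr (0 <= _); field.
Qed.

Definition rdiag a := cabs (rho a a).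

Lemma state_diagE a : rho a a = (rdiag a)%:C%C.
Proof. by rewrite /rdiag -cabsE ger0_norm ?state_diag_ge0. Qed.

Lemma rdiag_gt0 a : rho a a != 0 -> 0 < rdiag a.
Proof. by move=> raa_neq0; rewrite lt_def cabs_eq0 raa_neq0 cabs_ge0. Qed.

Lemma cabs_state_sqr_le a b : rho a a != 0 ->
  cabs (rho a b) ^+ 2 <= rdiag a * rdiag b.
Proof.
move=> raa_neq0; have := form_cauchy_schwarz (basis b) raa_neq0.
by rewrite !form_basis mulCJ !state_diagE -rmorphM lecR.
Qed.

(* Equality makes [basis j - (rho i j / rho i i) basis i] a null vector of the
   positive form, hence orthogonal to every [basis k]. *)
Lemma state_cs_equality i j k : rho i i != 0 -> rho k k != 0 ->
  cabs (rho i j) ^+ 2 = rdiag i * rdiag j -> rho k i * rho i j = rho k j * rho i i.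
Proof.
move=> rii_neq0 rkk_neq0 cs_eq.
pose u b := basis j b - rho i j / rho i i * basis i b.
have null_u : form u u = 0.
  have := form_schur_complement (basis j) rii_neq0; rewrite /= !form_basis => ->.
  by rewrite mulCJ cs_eq rmorphM /= -!state_diagE; field.
have := form_cauchy_schwarz u rkk_neq0.
rewrite null_u mulr0 mulCJ lecR => cs_k.
have : cabs (form (basis k) u) ^+ 2 == 0 by rewrite eq_le cs_k sqr_ge0.
rewrite sqrf_eq0 cabs_eq0 /u form_subr !form_basis subr_eq0 => /eqP ->.
by field.
Qed.

Definition disqrt a : R[i] := if rho a a != 0 then (sqrtC (rho a a))^-1 else 0.

Lemma RmatE a b : Rmat rho a b = disqrt a * rho a b * disqrt b.
Proof. by rewrite /Rmat /dephase_isqrt mul_mx_diag mul_diag_mx !mxE. Qed.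

Lemma Rmat_eq0 a b : (rho a a == 0) || (rho b b == 0) -> Rmat rho a b = 0.
Proof.
by rewrite RmatE /disqrt => /orP[] /eqP ->; rewrite eqxx ?mul0r ?mulr0.
Qed.

Lemma cabs_disqrt_sqr a : rho a a != 0 -> cabs (disqrt a) ^+ 2 * rdiag a = 1.
Proof.
move=> raa_neq0; rewrite /disqrt raa_neq0 cabsV exprVn -cabsX sqrtCK mulVf //.
by rewrite cabs_eq0.
Qed.

Lemma cabs_Rmat_sqr a b : rho a a != 0 -> rho b b != 0 ->
  cabs (Rmat rho a b) ^+ 2 * (rdiag a * rdiag b) = cabs (rho a b) ^+ 2.
Proof.
move=> raa_neq0 rbb_neq0; rewrite RmatE !cabsM.
transitivity ((cabs (disqrt a) ^+ 2 * rdiag a) * (cabs (disqrt b) ^+ 2 * rdiag b)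
              * cabs (rho a b) ^+ 2); first by ring.
by rewrite !cabs_disqrt_sqr // !mul1r.
Qed.

Lemma cabs_Rmat_diag a : rho a a != 0 -> cabs (Rmat rho a a) = 1.
Proof.
move=> raa_neq0; rewrite RmatE !cabsM -/(rdiag a) -(cabs_disqrt_sqr raa_neq0).
by ring.
Qed.

Lemma cabs_RmatC a b : cabs (Rmat rho a b) = cabs (Rmat rho b a).
Proof. by rewrite !RmatE !cabsM (stateC a b) cabsJ; ring. Qed.

Lemma cabs_Rmat_le1 a b : cabs (Rmat rho a b) <= 1.
Proof.
have [/Rmat_eq0 -> | ] := boolP ((rho a a == 0) || (rho b b == 0)).
  by rewrite cabs0.
rewrite negb_or => /andP[raa_neq0 rbb_neq0].
have rab_gt0 : 0 < rdiag a * rdiag b by rewrite mulr_gt0 ?rdiag_gt0.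
rewrite -(@expr_le1 _ 2) ?cabs_ge0 // -(ler_pM2r rab_gt0) mul1r.
by rewrite cabs_Rmat_sqr // cabs_state_sqr_le.
Qed.

Lemma cabs_Rmat_eq1 a b : cabs (Rmat rho a b) = 1 ->
  [/\ rho a a != 0, rho b b != 0 & cabs (rho a b) ^+ 2 = rdiag a * rdiag b].
Proof.
move=> Rab1; have [/Rmat_eq0 Rab0 | ] := boolP ((rho a a == 0) || (rho b b == 0)).
  by move: Rab1; rewrite Rab0 cabs0 => /eqP; rewrite eq_sym oner_eq0.
rewrite negb_or => /andP[raa_neq0 rbb_neq0]; split=> //.
by rewrite -cabs_Rmat_sqr // Rab1 expr1n mul1r.
Qed.

Definition unimodular a := [set b | cabs (Rmat rho a b) == 1].

Lemma rank_proj_unimodular a : rho a a != 0 ->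
  \rank (Pi (unimodular a) *m rho *m Pi (unimodular a)) = 1%N.
Proof.
move=> raa_neq0; set K := unimodular a.
have aK : a \in K by rewrite inE cabs_Rmat_diag.
have cs_eqK b : b \in K ->
    [/\ rho a a != 0, rho b b != 0 & cabs (rho a b) ^+ 2 = rdiag a * rdiag b].
  by rewrite inE => /eqP /cabs_Rmat_eq1.
pose u : 'cV[C]_d := \col_x ((x \in K)%:R * rho x a / rho a a).
pose w : 'rV[C]_d := \row_y (rho a y * (y \in K)%:R).
(* By [state_cs_equality], [rho x y * rho a a = rho x a * rho a y] on [K]. *)
have -> : Pi K *m rho *m Pi K = u *m w.
  apply/matrixP => x y; rewrite proj_mulmxE mxE big_ord1 !mxE.
  have [xK | _] := boolP (x \in K); last by rewrite !mul0r.
  have [yK | _] := boolP (y \in K); last by rewrite !mulr0.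
  have [_ rxx_neq0 _] := cs_eqK x xK; have [_ _ cs_eq] := cs_eqK y yK.
  rewrite !mul1r !mulr1 -mulrA mulrCA (state_cs_equality raa_neq0 rxx_neq0 cs_eq).
  by field.
apply/eqP; rewrite eqn_leq (leq_trans (mxrankM_maxl _ _) (rank_leq_col _)).
rewrite lt0n mxrank_eq0 /=.
apply/eqP => /matrixP /(_ a a); rewrite !mxE big_ord1 !mxE aK !mul1r mulr1.
by apply/eqP; rewrite mulf_neq0 ?mulfV.
Qed.

Lemma card_unimodular_le_ell a : (#|unimodular a| <= ell rho)%N.
Proof.
have [raa_neq0 | /negPn/eqP raa0] := boolP (rho a a != 0); last first.
  rewrite eq_card0 // => b.
  by rewrite !inE Rmat_eq0 ?raa0 ?eqxx // cabs0 eq_sym oner_eq0.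
have unimodular_diag : {in unimodular a, forall b, rho b b != 0}.
  by move=> b; rewrite inE => /eqP /cabs_Rmat_eq1 [].
apply: leq_trans (card_le_rank_dephase unimodular_diag) _.
have rank1 := rank_proj_unimodular raa_neq0.
exact: (leq_bigmax_cond (F := fun I => \rank (Pi I *m dephase rho *m Pi I))
          (unimodular a) (introT eqP rank1)).
Qed.

Lemma ell_gt0 : (0 < ell rho)%N.
Proof.
have /existsP [a raa_neq0] : [exists a, rho a a != 0].
  apply: contraT => /existsPn raa0; case: rho_state => _ _.
  rewrite /mxtrace big1 => [/eqP|a _]; first by rewrite eq_sym oner_eq0.
  exact/eqP/negPn/raa0.
apply: leq_trans (card_unimodular_le_ell a).
by apply/card_gt0P; exists a; rewrite inE cabs_Rmat_diag.
Qed.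

Lemma lam_ge0 : 0 <= lam rho.
Proof. exact: bigmax_ge_id. Qed.

Lemma lam_le1 : lam rho <= 1.
Proof. by apply: bigmax_le => // ij /andP[_ /ltW]. Qed.

Lemma le_lam a b : cabs (Rmat rho a b) < 1 -> cabs (Rmat rho a b) <= lam rho.
Proof.
move=> Rab_lt1; case: (ltngtP a b) => [a_lt_b | b_lt_a | /val_inj a_eq_b].
- by apply: (@le_bigmax_cond _ _ _ 0 (a, b)); rewrite /= a_lt_b.
- rewrite cabs_RmatC; apply: (@le_bigmax_cond _ _ _ 0 (b, a)).
  by rewrite /= b_lt_a -cabs_RmatC.
- move: Rab_lt1; rewrite -{}a_eq_b.
  have [/cabs_Rmat_diag -> | /negPn/eqP raa0] := boolP (rho a a != 0).
    by rewrite ltxx.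
  by rewrite Rmat_eq0 ?raa0 ?eqxx // cabs0 lam_ge0.
Qed.

Definition mu_bound (k : nat) : R := (ell rho)%:R + lam rho * (k%:R - (ell rho)%:R).

Lemma mu_bound_ge1 k : (1 <= k)%N -> 1 <= mu_bound k.
Proof.
move=> k_ge1; have ell_ge1 : 1 <= (ell rho)%:R :> R by rewrite ler1n ell_gt0.
rewrite -(ler_nat R) in k_ge1; have := lam_ge0; have := lam_le1; rewrite /mu_bound; nra.
Qed.

Lemma row_sum_le_mu_bound (I : {set 'I_d}) k a : (#|I| <= k)%N ->
  \sum_b cabs ((Pi I *m Rmat rho *m Pi I) a b) <= mu_bound k.
Proof.
move=> I_le_k; set K := unimodular a.
have entry_le b : cabs ((Pi I *m Rmat rho *m Pi I) a b)
    <= lam rho * (b \in I)%:R + (1 - lam rho) * (b \in I :&: K)%:R.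
  rewrite proj_mulmxE !cabsM !cabs_nat inE.
  have aI_ge0 : 0 <= ((a \in I)%:R : R) by [].
  have aI_le1 : ((a \in I)%:R : R) <= 1 by rewrite -[1 : R]/(1%:R) ler_nat leq_b1.
  have Rab_ge0 := cabs_ge0 (Rmat rho a b).
  case: (b \in I); rewrite /= ?mulr0 ?addr0 // mulr1.
  have [Rab1 | Rab_neq1] := eqVneq (cabs (Rmat rho a b)) 1.
    have -> : b \in K by rewrite inE Rab1.
    by rewrite Rab1 /= mulr1n; lra.
  have -> : b \in K = false by rewrite inE (negbTE Rab_neq1).
  have Rab_lt1 : cabs (Rmat rho a b) < 1 by rewrite lt_neqAle Rab_neq1 cabs_Rmat_le1.
  have := le_lam Rab_lt1; rewrite /= mulr0 addr0 mulr1; nra.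
apply: le_trans (ler_sum _ (fun b _ => entry_le b)) _.
rewrite big_split /= -!mulr_sumr !sumr_indicator /mu_bound.
have : (#|I :&: K| <= ell rho)%N.
  exact: leq_trans (subset_leq_card (subsetIr I K)) (card_unimodular_le_ell a).
rewrite -(ler_nat R) => IK_le; rewrite -(ler_nat R) in I_le_k.
have := lam_ge0; have := lam_le1; nra.
Qed.

Lemma opnorm_proj_Rmat_le (I : {set 'I_d}) k : (1 <= k)%N -> (#|I| <= k)%N ->
  opnorm (Pi I *m Rmat rho *m Pi I) <= mu_bound k.
Proof.
move=> k_ge1 I_le_k; apply: opnorm_le_row_sum => [|a b|a].
- exact: le_trans ler01 (mu_bound_ge1 k_ge1).
- by rewrite !proj_mulmxE !cabsM cabs_RmatC; ring.
- exact: row_sum_le_mu_bound.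
Qed.

End State.

Theorem lemma7 (R : realType) (d : nat) (rho : 'M[R[i]]_d) (k : nat) :
  is_state rho -> (1 <= k <= d)%N ->
  mu k rho <= log2 ((ell rho)%:R + lam rho * (k%:R - (ell rho)%:R)).
Proof.
move=> rho_state /andP[k_ge1 _].
have bound_ge1 := mu_bound_ge1 rho_state k_ge1.
rewrite -/(mu_bound rho k) /mu; apply: ler_log2 => //; first exact: bigmax_ge_id.
apply: bigmax_le => [|I]; first exact: le_trans ler01 bound_ge1.
exact: opnorm_proj_Rmat_le.
Qed.
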